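(* Let $E$ be a nonzero real Banach space and $g\colon E^*\times E^{**}\to\,]{-}\infty,\infty]$ be proper, convex and lower semicontinuous with $g(y^*,y^{**})\ge\langle y^*,y^{**}\rangle$ for all $(y^*,y^{**})\in E^*\times E^{**}$. Let $(z^*,z^{**})\in E^*\times E^{**}$ satisfy $g(z^*,z^{**})=\langle z^*,z^{**}\rangle$. Then $g^*(z^{**},\widehat{z^*})=\langle z^*,z^{**}\rangle$.
   Context: $\widehat{z^*}\in E^{***}$ is the canonical image of $z^*$. $(E^*\times E^{**})^*$ is identified with $E^{**}\times E^{***}$ via $\langle (y^*,y^{**}),(x^{**},x^{***})\rangle=\langle y^*,x^{**}\rangle+\langle y^{**},x^{***}\rangle$, and $g^*$ is the Fenchel conjugate of $g$ with respect to this pairing. *)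

From HB Require Import structures.
From mathcomp Require Import all_boot all_order all_algebra.
From mathcomp Require Import all_classical all_reals all_analysis.
Set Implicit Arguments. Unset Strict Implicit. Unset Printing Implicit Defensive.
Import Order.TTheory GRing.Theory Num.Theory.
Import numFieldNormedType.Exports.
Local Open Scope classical_set_scope.
Local Open Scope ring_scope.

(* Concrete encoding of the duals E', E'', E''' for a real normed space E:
   E'   = continuous linear functionals  E -> R           (subset of E -> R)
   E''  = bounded linear functionals on E'                (subset of (E->R)->R)
   E''' elements are functions ((E->R)->R) -> R; we only need the canonical
   image hat z1 of z1 in E'''. *)
Section Duals.
Variables (R : realType) (E : normedModType R).

Definition dual_space : set (E -> R) :=
  [set f | (forall (a : R) (x y : E), f (a *: x + y) = a * f x + f y)
           /\ continuous f].

Definition dnorm (f : E -> R) : R :=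
  sup [set `|f x| | x in [set x : E | `|x| <= 1]].

Definition bidual_space : set ((E -> R) -> R) :=
  [set F | (forall (a : R) (f h : E -> R), dual_space f -> dual_space h ->
              F (fun x => a * f x + h x) = a * F f + F h)
           /\ exists M : R, forall f, dual_space f -> `|F f| <= M * dnorm f].

Definition bdnorm (F : (E -> R) -> R) : R :=
  sup [set `|F f| | f in [set f | dual_space f /\ dnorm f <= 1]].

Definition hat (zs : E -> R) : ((E -> R) -> R) -> R := fun F => F zs.

Definition fconj (g : (E -> R) -> ((E -> R) -> R) -> \bar R)
  (x2 : (E -> R) -> R) (x3 : ((E -> R) -> R) -> R) : \bar R :=
  ereal_sup [set ((x2 y.1 + x3 y.2)%:E - g y.1 y.2)%E
            | y in dual_space `*` bidual_space].

Definition g_proper (g : (E -> R) -> ((E -> R) -> R) -> \bar R) : Prop :=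
  (forall y1 y2, dual_space y1 -> bidual_space y2 -> g y1 y2 != -oo%E) /\
  exists y1 y2, [/\ dual_space y1, bidual_space y2 & (g y1 y2 < +oo)%E].

Definition g_convex (g : (E -> R) -> ((E -> R) -> R) -> \bar R) : Prop :=
  forall y1 y2 y1' y2' (t : R),
    dual_space y1 -> bidual_space y2 -> dual_space y1' -> bidual_space y2' ->
    0 <= t <= 1 ->
    (g (fun x => t * y1 x + (1 - t) * y1' x)%R
       (fun f => t * y2 f + (1 - t) * y2' f)%R
     <= t%:E * g y1 y2 + (1 - t)%:E * g y1' y2')%E.

Definition g_lsc (g : (E -> R) -> ((E -> R) -> R) -> \bar R) : Prop :=
  forall y1 y2, dual_space y1 -> bidual_space y2 ->
  forall r : R, (r%:E < g y1 y2)%E ->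
  exists2 d : R, 0 < d &
    forall y1' y2', dual_space y1' -> bidual_space y2' ->
      dnorm (fun x => y1' x - y1 x) < d ->
      bdnorm (fun f => y2' f - y2 f) < d ->
      (r%:E < g y1' y2')%E.

End Duals.

From HB Require Import structures.
From mathcomp Require Import all_boot all_order all_algebra.
From mathcomp Require Import all_classical all_reals all_analysis.
From mathcomp Require Import ring lra.
Import Order.TTheory GRing.Theory Num.Theory.
Import numFieldNormedType.Exports.
Local Open Scope classical_set_scope.
Local Open Scope ring_scope.

(* Let c = <z^*, z^**> and let y, with components y^* and y^**, satisfy g y = a
   finite.  Along the segment from z to y, convexity of g and g >= <.,.> give,
   after expanding the bilinear pairing, t (t K + d) <= 0 for 0 < t <= 1 and
   some constant K, where d = <y^*, z^**> + <z^*, y^**> - a - c.  Letting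
   t -> 0 yields d <= 0: every term of the supremum defining g^* at z^** and
   hat z^* is at most c, and the term at y = z equals c. *)

Lemma le0_of_affine_le0 (R : realFieldType) (K d : R) :
  (forall t, 0 < t <= 1 -> t * K + d <= 0) -> d <= 0.
Proof.
move=> affine_le0; rewrite leNgt; apply/negP => d_gt0.
have dK_gt0 : 0 < d + `|K| by have := normr_ge0 K; lra.
pose t := d / (d + `|K|).
have t_gt0 : 0 < t by rewrite divr_gt0.
have t_le1 : t <= 1 by rewrite ler_pdivrMr // mul1r; have := normr_ge0 K; lra.
have tdK : t * d + t * `|K| = d by rewrite -mulrDr mulfVK ?gt_eqF.
have tK_ge : - (t * `|K|) <= t * K.
  by rewrite -mulrN ler_pM2l // lerNnormlW.
have td_gt0 : 0 < t * d by rewrite mulr_gt0.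
have := affine_le0 t; rewrite t_gt0 t_le1 => /(_ isT); lra.
Qed.

Section DualSpaces.
Context {R : realType} {E : normedModType R}.

Lemma dual_space0 : dual_space (fun _ : E => 0 : R).
Proof. by split => [*|x]; [ring | exact: cvg_cst]. Qed.

Lemma dual_space_comb {f h : E -> R} (a b : R) :
  dual_space f -> dual_space h -> dual_space (fun x => a * f x + b * h x).
Proof.
move=> [lf cf] [lh ch]; split => [c x y|x]; first by rewrite lf lh; ring.
by apply: cvgD; apply: cvgMl_tmp; [exact: cf | exact: ch].
Qed.

Lemma bidual_space_comb_eval (F : (E -> R) -> R) (f h : E -> R) (a b : R) :
  bidual_space F -> dual_space f -> dual_space h ->
  F (fun x => a * f x + b * h x) = a * F f + b * F h.
Proof.
move=> [linF _] df dh.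
have F0 : F (fun _ => 0) = 0.
  have /= := linF 1 _ _ dual_space0 dual_space0.
  rewrite mul1r addr0 mul1r => /(congr1 (fun u => u - F (fun _ => 0))).
  by rewrite subrr addrK.
have Fscale c (k : E -> R) : dual_space k -> F (fun x => c * k x) = c * F k.
  move=> dk; have /= := linF c _ _ dk dual_space0.
  by under [in F _ = _]eq_fun do rewrite addr0; rewrite F0 addr0.
have /= := linF a _ _ df (dual_space_comb 0 b dual_space0 dh).
under [in F _ = _]eq_fun do rewrite mul0r add0r.
by move=> ->; under eq_fun do rewrite mul0r add0r; rewrite Fscale.
Qed.

Lemma bidual_space_comb {F G : (E -> R) -> R} (a b : R) :
  bidual_space F -> bidual_space G -> bidual_space (fun f => a * F f + b * G f).
Proof.
move=> BF BG; split => [c f h df dh|].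
  have -> : (fun x => c * f x + h x) = (fun x => c * f x + 1 * h x)
    by apply: funext => x; rewrite mul1r.
  by rewrite !bidual_space_comb_eval //; ring.
case: BF BG => _ [M1 HM1] [_ [M2 HM2]].
exists (`|a| * M1 + `|b| * M2) => f df.
apply: (le_trans (ler_normD _ _)); rewrite !normrM mulrDl -!mulrA.
by apply: lerD; apply: ler_wpM2l => //; [apply: HM1 | apply: HM2].
Qed.

End DualSpaces.

Section ConjugateAtTouchingPoint.
Variables (R : realType) (E : normedModType R).
Variable g : (E -> R) -> ((E -> R) -> R) -> \bar R.
Hypothesis gconvex : g_convex g.
Hypothesis gge : forall y1 y2, dual_space y1 -> bidual_space y2 ->
  ((y2 y1)%:E <= g y1 y2)%E.
Variables (z1 : E -> R) (z2 : (E -> R) -> R).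
Hypotheses (hz1 : dual_space z1) (hz2 : bidual_space z2).
Hypothesis hz : g z1 z2 = (z2 z1)%:E.

Lemma cross_pairing_sub_le (y1 : E -> R) (y2 : (E -> R) -> R) (a : R) :
  dual_space y1 -> bidual_space y2 -> g y1 y2 = a%:E ->
  z2 y1 + y2 z1 - a <= z2 z1.
Proof.
move=> dy1 dy2 gy; rewrite -subr_le0.
apply: (@le0_of_affine_le0 _ (y2 y1 - (z2 y1 + y2 z1) + z2 z1)).
move=> t /andP[t_gt0 t_le1]; rewrite -(pmulr_rle0 _ t_gt0).
have t01 : 0 <= t <= 1 by rewrite ltW.
have := le_trans (gge _ _ (dual_space_comb t (1 - t) dy1 hz1)
                      (bidual_space_comb t (1 - t) dy2 hz2))
                 (gconvex _ _ _ _ _ dy1 dy2 hz1 hz2 t01).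
rewrite gy hz -!EFinM -EFinD lee_fin !bidual_space_comb_eval //.
lra.
Qed.

Lemma fconj_term_le (y1 : E -> R) (y2 : (E -> R) -> R) :
  dual_space y1 -> bidual_space y2 ->
  ((z2 y1 + y2 z1)%:E - g y1 y2 <= (z2 z1)%:E)%E.
Proof.
move=> dy1 dy2; have := gge _ _ dy1 dy2.
case gy : (g y1 y2) => [a| |] //= _; last by rewrite addeNy leNye.
by rewrite -EFinB lee_fin (cross_pairing_sub_le _ _ _ dy1 dy2 gy).
Qed.

End ConjugateAtTouchingPoint.

Theorem lemma7p3 (R : realType) (E : completeNormedModType R)
  (hE : exists x : E, x != 0)
  (g : (E -> R) -> ((E -> R) -> R) -> \bar R)
  (gproper : g_proper g) (gconvex : g_convex g) (glsc : g_lsc g)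
  (gge : forall y1 y2, dual_space y1 -> bidual_space y2 ->
           ((y2 y1)%:E <= g y1 y2)%E)
  (z1 : E -> R) (z2 : (E -> R) -> R)
  (hz1 : dual_space z1) (hz2 : bidual_space z2)
  (hz : g z1 z2 = (z2 z1)%:E) :
  fconj g z2 (hat z1) = (z2 z1)%:E.
Proof.
apply/eqP; rewrite eq_le; apply/andP; split.
  apply: ge_ereal_sup => _ [[y1 y2] [/= dy1 dy2] <-].
  exact: fconj_term_le.
apply: ereal_sup_ubound; exists (z1, z2) => //=.
by rewrite /hat hz -EFinB addrK.
Qed.
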